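(* Let $p$ be a prime and $z\ge 2$ a real number. There is an algorithm which, given as input $p$, $z$, the table of the values $q_p(v)$ for all integers $v\in[0,p/z]$, the table of the values $v^{-1}\bmod p$ (least nonnegative residue) for all integers $v\in[1,p/z]$ with $\gcd(v,p)=1$, the table of the values $v^{-1}\bmod p^2$ (least nonnegative residue) for all integers $v\in[1,z]$ with $\gcd(v,p)=1$, and an integer $u$ with $0\le u<p-1$, computes $q_p(u)$ using $O(\log z)$ arithmetic operations on $O(\log p)$-bit integers.
   Context: For a prime $p$ and an integer $u$ with $\gcd(u,p)=1$, the Fermat quotient $q_p(u)$ is the unique integer with $q_p(u)\equiv (u^{p-1}-1)/p \pmod p$ and $0\le q_p(u)\le p-1$; also $q_p(kp)=0$ for all $k\in\mathbb{Z}$. *)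

(* A simple register-machine model of computation with
   oracle access to the three precomputed tables; each executed
   instruction counts as one operation. *)
From HB Require Import structures.
From mathcomp Require Import all_boot all_order all_algebra.
From mathcomp Require Import reals.
Set Implicit Arguments. Unset Strict Implicit. Unset Printing Implicit Defensive.
Import Order.TTheory GRing.Theory Num.Theory.
Local Open Scope ring_scope.

(* For p not dividing v,
   v^(p-1) - 1 is divisible by p, so the quotient is exact and we reduce
   it modulo p to get the unique representative in [0, p-1]. *)
Definition fq (p v : nat) : nat :=
  if (p %| v)%N then 0%N else (((v ^ p.-1 - 1) %/ p) %% p)%N.

Definition invmod (m v : nat) : nat :=
  odflt 0%N (omap val [pick w : 'I_m | ((v * w) %% m == 1 %% m)%N]).

Inductive aop := AAdd | ASub | AMul | ADiv | AMod.
Inductive tbl := TQ | TInvP | TInvP2.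

Inductive instr :=
| IConst (r : nat) (c : int)
| IArith (o : aop) (r a b : nat)        (* r := a o b *)
| ILook (t : tbl) (r a : nat)           (* r := table t at (reg a) *)
| IJlt (a b l : nat)                    (* if reg a < reg b goto l *)
| IJmp (l : nat)
| IHalt (r : nat).                      (* return reg r *)

Definition aop_eval (o : aop) (x y : int) : int :=
  match o with
  | AAdd => x + y | ASub => x - y | AMul => x * y
  | ADiv => (x %/ y)%Z | AMod => (x %% y)%Z
  end.

Definition state := (nat * (nat -> int))%type.

Inductive outcome := Next of state | Done of int | Stuck.

Definition upd (f : nat -> int) (r : nat) (v : int) : nat -> int :=
  fun i => if i == r then v else f i.

(* One step of program P with tables T; an arithmetic result of absolute
   value larger than B makes the machine fail (bit-size restriction). *)
Definition step (P : seq instr) (T : tbl -> int -> int) (B : int) (s : state)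
  : outcome :=
  let: (pc, g) := s in
  if (pc < size P)%N then
    match nth (IHalt 0) P pc with
    | IConst r c => Next (pc.+1, upd g r c)
    | IArith o r a b =>
        let v := aop_eval o (g a) (g b) in
        if `|v| <= B then Next (pc.+1, upd g r v) else Stuck
    | ILook t r a => Next (pc.+1, upd g r (T t (g a)))
    | IJlt a b l => if g a < g b then Next (l, g) else Next (pc.+1, g)
    | IJmp l => Next (l, g)
    | IHalt r => Done (g r)
    end
  else Stuck.

Fixpoint run (P : seq instr) (T : tbl -> int -> int) (B : int) (n : nat)
  (s : state) : outcome :=
  match n with
  | 0%N => Next s
  | n'.+1 => match step P T B s with
             | Next s' => run P T B n' s'
             | o => o
             end
  end.

(* The input tables, as oracles (value 0 outside their domain). *)
Definition tables {R : realType} (p : nat) (z : R) (t : tbl) (a : int) : int :=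
  match t with
  | TQ => if (0 <= a) && (a%:~R <= p%:R / z) then (fq p `|a|%N)%:Z else 0
  | TInvP => if (1 <= a) && (a%:~R <= p%:R / z) && coprime `|a|%N p
             then (invmod p `|a|%N)%:Z else 0
  | TInvP2 => if (1 <= a) && (a%:~R <= z) && coprime `|a|%N p
              then (invmod (p ^ 2) `|a|%N)%:Z else 0
  end.

Definition init {R : realType} (p : nat) (z : R) (u : nat) : nat -> int :=
  fun i => if i == 0%N then p%:Z else if i == 1%N then Num.floor z
           else if i == 2%N then Num.floor (p%:R / z)
           else if i == 3%N then u%:Z else 0.

From HB Require Import structures.
From mathcomp Require Import all_boot all_order all_algebra.
From mathcomp Require Import reals.
From mathcomp Require Import zify ring lra.
Set Implicit Arguments. Unset Strict Implicit. Unset Printing Implicit Defensive.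
Import Order.TTheory GRing.Theory Num.Theory.
Local Open Scope ring_scope.

(* Two regimes, according to whether [K = floor (p / z)] is below [N = floor z].
   If [K < N] then [p < N (N + 1)], and [u ^ (p - 1) mod p^2] is computed by
   square-and-multiply in [O(log p) = O(log N)] steps; [q_p(u)] is then
   [(u ^ (p - 1) mod p^2 - 1) / p].
   Otherwise the half-extended Euclidean algorithm on [(p, u)], stopped just
   before the cofactor exceeds [N], gives [u s = w + p t] with [0 < |s| <= N <= K]
   and [0 < w <= p / (N + 1)], so [q_p(w)], [w^-1 mod p] and [q_p(|s|)] are table
   entries. The Fermat quotient is a logarithm modulo [p]
   ([q_p(x y) = q_p(x) + q_p(y)], and [q_p(-x) = q_p(x)] as [p - 1] is even), and
   [q_p(w + p t) = q_p(w) - t w^-1 (mod p)]; hence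
   [q_p(u) = q_p(w) - t w^-1 - q_p(|s|) (mod p)]. The Euclidean loop stops after
   [O(log N)] rounds because the squared sum of two consecutive cofactors at
   least doubles at each round. All intermediate values are at most [p^4] in
   absolute value, and the table of inverses modulo [p^2] is not needed. *)

(** * Fermat quotients *)

Lemma binomial_first_order (R : comPzRingType) (w c t : R) n :
  exists X, (w + c * t) ^+ n.+1 = w ^+ n.+1 + n.+1%:R * w ^+ n * c * t + c ^+ 2 * X.
Proof.
elim: n => [|n [X IH]]; first by exists 0; rewrite expr1 expr0; ring.
exists ((w + c * t) * X + n.+1%:R * w ^+ n * t ^+ 2).
by rewrite exprS IH !exprS -[n.+2]addn1 -[n.+1]addn1 !natrD; ring.
Qed.

Section FermatQuotient.
Variable p : nat.
Hypothesis p_prime : prime p.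
Local Notation P := p%:Z.

Lemma fermat_little_pred a : ~~ (p %| a)%N -> (p %| a ^ p.-1 - 1)%N.
Proof.
move=> pNa; have a_gt0 : (0 < a)%N by case: a pNa => [|a]; rewrite ?dvdn0.
rewrite -(Gauss_dvdr _ (_ : coprime p a)) ?prime_coprime // mulnBr muln1 -expnS.
rewrite prednK ?(prime_gt0 p_prime) // -eqn_mod_dvd; first exact/eqP/fermat_little.
by rewrite -{1}(expn1 a) (leq_pexp2l a_gt0) //; apply: prime_gt0.
Qed.

Lemma fq_ltp a : (fq p a < p)%N.
Proof. by rewrite /fq; case: ifP => _; [exact: prime_gt0 | rewrite ltn_pmod ?prime_gt0]. Qed.

Lemma expn_fq a : ~~ (p %| a)%N ->
  exists m, (a ^ p.-1 = 1 + p * fq p a + p * p * m)%N.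
Proof.
move=> pNa; have a_gt0 : (0 < a)%N by case: a pNa => [|a]; rewrite ?dvdn0.
have p_dvd := fermat_little_pred pNa.
rewrite /fq (negbTE pNa); set m := ((a ^ p.-1 - 1) %/ p)%N.
have Em : (a ^ p.-1 = 1 + p * m)%N.
  by rewrite /m mulnC divnK //; have := expn_gt0 a p.-1; rewrite a_gt0; lia.
by exists (m %/ p)%N; rewrite Em {1}(divn_eq m p); ring.
Qed.

(* [fq_congr x a] says that [a] is a Fermat quotient of the integer [x]
   modulo [p]: [x ^ (p - 1) = 1 + p a (mod p^2)]. *)
Definition fq_congr (x a : int) := (P ^+ 2 %| x ^+ p.-1 - 1 - P * a)%Z.

Lemma fq_congr_fq (a : nat) : ~~ (p %| a)%N -> fq_congr a (fq p a).
Proof.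
move=> /expn_fq [m Em]; apply/dvdzP; exists m%:Z.
by rewrite -[a%:Z]natz -natrX natz Em !PoszD !PoszM; ring.
Qed.

Lemma fq_congrM x y a b : fq_congr x a -> fq_congr y b -> fq_congr (x * y) (a + b).
Proof.
move=> /dvdzP [k Ex] /dvdzP [l Ey]; apply/dvdzP.
exists (a * b + (1 + P * a) * l + k * y ^+ p.-1).
rewrite exprMn (_ : x ^+ p.-1 = 1 + P * a + k * P ^+ 2); last by rewrite -Ex; ring.
by rewrite (_ : y ^+ p.-1 = 1 + P * b + l * P ^+ 2); [ring | rewrite -Ey; ring].
Qed.

Lemma fq_congrN x a : odd p -> fq_congr x a -> fq_congr (- x) a.
Proof.
have [-> //|p_pos] := posnP p; rewrite -(prednK p_pos) /= => /negbTE p1_even.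
by rewrite /fq_congr exprNn -signr_odd p1_even mul1r.
Qed.

Lemma fq_congr_shift w t i a : fq_congr w a -> (P %| w * i - 1)%Z ->
  fq_congr (w + P * t) (a - t * i).
Proof.
move=> w_fq w_inv; have p_gt1 := prime_gt1 p_prime.
have [n En] : exists n, p.-1 = n.+1 by exists p.-2; lia.
have [X EX] := binomial_first_order w P t n.
have P_dvd_fq : (P %| w ^+ p.-1 - 1 - P * a)%Z.
  by apply: dvdz_trans w_fq; rewrite expr2 dvdz_mulr.
(* [w ^ (p - 2)] is an inverse of [w] modulo [p] *)
have inv_pow : (P %| w ^+ n - i)%Z.
  rewrite (_ : _ - i = - w ^+ n * (w * i - 1) + i * (w ^+ p.-1 - 1 - P * a) + P * (i * a)).
    by apply: rpredD; [apply: rpredD|]; [apply: dvdz_mull..|apply: dvdz_mulr].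
  by rewrite En exprS; ring.
rewrite /fq_congr En EX -En (_ : p.-1%:R = P - 1); last by rewrite natz; lia.
rewrite (_ : _ - _ = w ^+ p.-1 - 1 - P * a + P ^+ 2 * (X + w ^+ n * t) - P * t * (w ^+ n - i)).
  apply: rpredB; first apply: rpredD => //; first exact: dvdz_mulr.
  by rewrite expr2 -mulrA dvdz_mul // dvdz_mull.
by ring.
Qed.

Lemma fq_congr_unique x a b : fq_congr x a -> fq_congr x b -> (P %| a - b)%Z.
Proof.
move=> xa xb; have P_neq0 : P != 0 by rewrite eqz_nat -lt0n prime_gt0.
rewrite -(@dvdz_mul2l P P (a - b) P_neq0) -expr2.
rewrite (_ : P * (a - b) = (x ^+ p.-1 - 1 - P * b) - (x ^+ p.-1 - 1 - P * a)).
  exact: rpredB.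
by ring.
Qed.

Lemma invmod_ltp w : ~~ (p %| w)%N -> (invmod p w < p)%N.
Proof.
move=> pNw; rewrite /invmod; case: pickP => [i _ | no_inv] /=; first exact: ltn_ord.
exact: prime_gt0.
Qed.

Lemma invmodP w : ~~ (p %| w)%N -> (P %| w%:Z * (invmod p w)%:Z - 1)%Z.
Proof.
move=> pNw; have p_gt1 := prime_gt1 p_prime.
have w_gt0 : (0 < w)%N by rewrite lt0n; apply: contra pNw => /eqP ->.
have w_inv : ((w * invmod p w) %% p = 1)%N.
  rewrite /invmod; case: pickP => [i /eqP -> | no_inv] /=; first exact: modn_small.
  have w_pow_lt : (w ^ p.-2 %% p < p)%N by rewrite ltn_pmod // prime_gt0.
  move: (no_inv (Ordinal w_pow_lt)) => /=; rewrite modnMmr -expnS.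
  have /(fermat_little_pred) : ~~ (p %| w)%N by [].
  rewrite prednK; last lia.
  rewrite -eqn_mod_dvd ?expn_gt0 ?w_gt0 //.
  by move=> /eqP ->; rewrite eqxx.
apply/dvdzP; exists ((w * invmod p w) %/ p)%N%:Z.
by rewrite -PoszM {1}(divn_eq (w * invmod p w) p) w_inv PoszD PoszM addrK.
Qed.

Lemma fq_of_pow_mod r u : ~~ (p %| u)%N -> (r < p * p)%N ->
  r = u ^ p.-1 %[mod p * p] -> ((r%:Z - 1) %/ P)%Z = (fq p u)%:Z.
Proof.
move=> pNu r_lt r_pow; have [m Em] := expn_fq pNu; have fq_lt := fq_ltp u.
have -> : r = (1 + p * fq p u)%N.
  rewrite -(modn_small r_lt) r_pow Em addnC [(p * p * m)%N]mulnC modnMDl.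
  by rewrite modn_small //; nia.
by rewrite PoszD addrC addKr PoszM mulKz // eqz_nat -lt0n prime_gt0.
Qed.

Lemma fq_reduction (u w : nat) (s t : int) : odd p ->
  ~~ (p %| u)%N -> ~~ (p %| w)%N -> ~~ (p %| `|s|)%N -> u%:Z * s = w%:Z + P * t ->
  (fq p u)%:Z = (((fq p w)%:Z - t * (invmod p w)%:Z - (fq p `|s|)%:Z) %% P)%Z.
Proof.
move=> p_odd pNu pNw pNs Eus.
have s_fq : fq_congr s (fq p `|s|).
  have := fq_congr_fq pNs; rewrite abszE.
  by have [_|_] := ger0P s => // /(fq_congrN p_odd); rewrite opprK.
have us_fq := fq_congrM (fq_congr_fq pNu) s_fq.
rewrite Eus in us_fq.
have /dvdzP [k Ek] := fq_congr_unique us_fq (fq_congr_shift t (fq_congr_fq pNw) (invmodP pNw)).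
rewrite (_ : _ - _ = - k * P + (fq p u)%:Z); last by rewrite mulNr -Ek; ring.
by rewrite modzMDl modz_small // ltz_nat fq_ltp.
Qed.
End FermatQuotient.

(** * Short representatives from the Euclidean algorithm *)

(* The half-extended Euclidean algorithm on [(p, u)]: consecutive remainders
   [rp > rc > 0] with cofactors [sp], [sc] of alternating signs, so that
   [u s = r (mod p)]; the determinant identity bounds [rc] once the next
   cofactor exceeds [N], and [(|sp| + |sc|)^2] at least doubles at every step,
   so that it is at least [2 ^ j] after [j] steps. *)
Record euclid_inv (p : nat) (N u : int) (j : nat) (rp rc sp sc : int) : Prop :=
  EuclidInv {
    ei_rc_gt0 : 0 < rc;
    ei_rc_lt : rc < rp;
    ei_rp_le : rp <= p%:Z;
    ei_sp_congr : (p%:Z %| u * sp - rp)%Z;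
    ei_sc_congr : (p%:Z %| u * sc - rc)%Z;
    ei_det : rp * `|sc| + rc * `|sp| = p%:Z;
    ei_sc_neq0 : sc != 0;
    ei_sign : sp * sc <= 0;
    ei_sp_le : `|sp| <= `|sc|;
    ei_sc_le : `|sc| <= N;
    ei_growth : (2 ^ j)%N%:Z <= (`|sp| + `|sc|) ^+ 2 }.

Record short_rep (p : nat) (N u w s : int) : Prop :=
  ShortRep {
    sr_w_gt0 : 0 < w;
    sr_w_small : w * (N + 1) <= p%:Z;
    sr_s_neq0 : s != 0;
    sr_s_le : `|s| <= N;
    sr_congr : (p%:Z %| u * s - w)%Z }.

Lemma normrB_opposite (x y a : int) : x * y <= 0 -> 0 < a -> y != 0 ->
  `|x - a * y| = `|x| + a * `|y| /\ y * (x - a * y) < 0.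
Proof.
move=> xy_le0 a_gt0 y_neq0; have [y_gt0 | y_le0] := ltrP 0 y.
  have : x <= 0 by rewrite -(pmulr_rle0 _ y_gt0) mulrC.
  split; nia.
have y_lt0 : y < 0 by rewrite lt_neqAle y_le0 y_neq0.
have : 0 <= x by rewrite -(nmulr_rle0 _ y_lt0) mulrC.
split; nia.
Qed.

Section EuclidStep.
Variables (p : nat) (N u : int) (j : nat) (rp rc sp sc : int).
Hypothesis inv : euclid_inv p N u j rp rc sp sc.
Let a := (rp %/ rc)%Z.
Let sn := sp - a * sc.
Let rn := rp - a * rc.

Lemma euclid_rem : rn = (rp %% rc)%Z /\ 0 <= rn < rc.
Proof.
have rc_gt0 := ei_rc_gt0 inv.
have -> : rn = (rp %% rc)%Z by rewrite /rn /a {1}(divz_eq rp rc); ring.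
by rewrite modz_ge0 ?ltz_pmod // gt_eqF.
Qed.

Lemma euclid_quot_ge1 : 1 <= a.
Proof.
have [_ /andP[_ rn_lt]] := euclid_rem; have := ei_rc_lt inv.
have : a * rc = rp - rn by rewrite /rn; ring.
have := ei_rc_gt0 inv; nia.
Qed.

Lemma euclid_next_cofactor : `|sn| = `|sp| + a * `|sc| /\ sc * sn < 0.
Proof.
apply: normrB_opposite (ei_sign inv) _ (ei_sc_neq0 inv).
exact: lt_le_trans euclid_quot_ge1.
Qed.

Lemma euclid_short_rep : N < `|sn| -> short_rep p N u rc sc.
Proof.
case: inv => rc_gt0 _ _ _ sc_congr det sc_neq0 _ _ sc_le _ N_lt.
have [_ /andP[rn_ge0 _]] := euclid_rem; have [sn_abs _] := euclid_next_cofactor.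
split => //; apply: le_trans (_ : rc * `|sn| <= p%:Z).
  by rewrite ler_pM2l //; lia.
have arc_le : a * rc <= rp by move: rn_ge0; rewrite /rn; lia.
have : rc * (a * `|sc|) <= rp * `|sc| by rewrite mulrA (mulrC rc) ler_wpM2r.
by rewrite sn_abs -det mulrDr; lia.
Qed.

Lemma euclid_next_det : rc * `|sn| + rn * `|sc| = p%:Z.
Proof. by rewrite (euclid_next_cofactor).1 -(ei_det inv) /rn; ring. Qed.

Lemma euclid_rem_gt0 : prime p -> N < p%:Z -> `|sn| <= N -> 0 < rn.
Proof.
move=> p_prime N_ltp sn_le; have [_ /andP[rn_ge0 _]] := euclid_rem.
rewrite lt_neqAle rn_ge0 andbT; apply/eqP => rn0.
have := euclid_next_det; rewrite -rn0 mul0r addr0 => det.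
have sn_dvd : (`|sn|%N %| p)%N.
  by apply/dvdnP; exists `|rc|%N; rewrite -[p]/(`|p%:Z|%N) -det abszM mulnC.
have := ei_rc_lt inv; have := ei_rp_le inv.
case/primeP: p_prime => _ /(_ _ sn_dvd) /orP [] /eqP /(congr1 Posz); rewrite abszE.
  by move=> sn1; rewrite sn1 mulr1 in det; move: det; clear; lia.
by move: sn_le N_ltp; clear; lia.
Qed.

Lemma euclid_step : prime p -> N < p%:Z -> `|sn| <= N -> euclid_inv p N u j.+1 rc rn sc sn.
Proof.
move=> p_prime N_ltp sn_le.
case: (inv) => rc_gt0 rc_lt rp_le sp_congr sc_congr _ sc_neq0 _ sp_le _ growth.
have [_ /andP[_ rn_lt]] := euclid_rem; have [sn_abs sn_sign] := euclid_next_cofactor.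
have a_ge1 := euclid_quot_ge1.
have sc_le_asc : `|sc| <= a * `|sc| by rewrite ler_peMl.
split => //.
- exact: euclid_rem_gt0.
- exact: le_trans (ltW rc_lt) rp_le.
- rewrite (_ : u * sn - rn = (u * sp - rp) - a * (u * sc - rc)); last by rewrite /sn /rn; ring.
  by rewrite rpredB // dvdz_mull.
- exact: euclid_next_det.
- by apply: contraTneq sn_sign => ->; rewrite mulr0 ltxx.
- exact: ltW.
- by rewrite sn_abs; lia.
rewrite expnS PoszM sn_abs; apply: le_trans (_ : 2 * (`|sp| + `|sc|) ^+ 2 <= _).
  by rewrite ler_pM2l.
have : 0 <= `|sp| by []; have : 0 <= `|sc| by [].
move: sp_le sc_le_asc; move: `|sp| `|sc| (a * `|sc|) => x y ay; clear; nia.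
Qed.
End EuclidStep.

(** * Executing the register machine *)

Section Execution.
Variables (P : seq instr) (T : tbl -> int -> int) (B : int).
Local Notation run := (run P T B).
Local Notation step := (step P T B).

Definition reach k s s' := run k s = Next s'.

Lemma reach0 s : reach 0 s s. Proof. by []. Qed.

Lemma reach_step k s s1 s2 : step s = Next s1 -> reach k s1 s2 -> reach k.+1 s s2.
Proof. by rewrite /reach /= => ->. Qed.

Lemma run_cat n m s :
  run (n + m) s = if run n s is Next s' then run m s' else run n s.
Proof. by elim: n s => [|n IH] s //=; case: (step s). Qed.

Lemma reach_trans k1 k2 s s1 s2 : reach k1 s s1 -> reach k2 s1 s2 -> reach (k1 + k2) s s2.
Proof. by rewrite /reach run_cat => ->. Qed.

Lemma reach_done k s s1 v : reach k s s1 -> step s1 = Done v -> run k.+1 s = Done v.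
Proof. by rewrite /reach -addn1 run_cat => -> /= ->. Qed.

Section Instructions.
Variables (pc : nat) (g : nat -> int).
Hypothesis pc_lt : (pc < size P)%N.

Lemma step_const r c : nth (IHalt 0) P pc = IConst r c ->
  step (pc, g) = Next (pc.+1, upd g r c).
Proof. by move=> instr; rewrite /= pc_lt instr. Qed.

Lemma step_arith o r a b : nth (IHalt 0) P pc = IArith o r a b ->
  `|aop_eval o (g a) (g b)| <= B ->
  step (pc, g) = Next (pc.+1, upd g r (aop_eval o (g a) (g b))).
Proof. by move=> instr small; rewrite /= pc_lt instr small. Qed.

Lemma step_look t r a : nth (IHalt 0) P pc = ILook t r a ->
  step (pc, g) = Next (pc.+1, upd g r (T t (g a))).
Proof. by move=> instr; rewrite /= pc_lt instr. Qed.

Lemma step_jump a b l : nth (IHalt 0) P pc = IJlt a b l -> g a < g b ->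
  step (pc, g) = Next (l, g).
Proof. by move=> instr lt_ab; rewrite /= pc_lt instr lt_ab. Qed.

Lemma step_nojump a b l : nth (IHalt 0) P pc = IJlt a b l -> g b <= g a ->
  step (pc, g) = Next (pc.+1, g).
Proof. by move=> instr le_ba; rewrite /= pc_lt instr ltNge le_ba. Qed.

Lemma step_goto l : nth (IHalt 0) P pc = IJmp l -> step (pc, g) = Next (l, g).
Proof. by move=> instr; rewrite /= pc_lt instr. Qed.

Lemma step_halt r : nth (IHalt 0) P pc = IHalt r -> step (pc, g) = Done (g r).
Proof. by move=> instr; rewrite /= pc_lt instr. Qed.
End Instructions.
End Execution.

(* The size check
   of an arithmetic instruction is closed automatically when it is literally a
   hypothesis; otherwise it is left as the first subgoal, like the comparison
   deciding a conditional jump. *)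
Ltac exec_const := eapply reach_step; [apply: step_const => //= |].
Ltac exec_arith := eapply reach_step; [apply: step_arith => //=; rewrite /upd /= |].
Ltac exec_look := eapply reach_step; [apply: step_look => //= |].
Ltac exec_jump := eapply reach_step; [apply: step_jump => //=; rewrite /upd /= |].
Ltac exec_nojump := eapply reach_step; [apply: step_nojump => //=; rewrite /upd /= |].
Ltac exec_goto := eapply reach_step; [apply: step_goto => //= |].

(* Registers: r0 = p, r1 = N = floor z, r2 = K = floor (p / z), r3 = u,
   r9 = 0, r10 = 1, r11 = 2.
   Euclid loop (10-21): r4, r5, r6, r7 = rp, rc, sp, sc; r12 = -N;
   r13 = rp / rc; r14 = sp - (rp / rc) sc; r15 = rp mod rc.
   Table lookups (22-35): w = r5, s = r7, r16 = |s|, r20 = t = (u s - w) / p.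
   Square-and-multiply (37-53): r22 = p^2, r23 * r24 ^ r25 = u ^ (p - 1). *)
Definition Prog : seq instr := [::
 IConst 9 0; IConst 10 1; IConst 11 2; IJlt 3 10 36; IJlt 2 1 37;
 IArith ASub 12 9 1; IArith AAdd 4 0 9; IArith AAdd 5 3 9; IConst 6 0; IConst 7 1;
 (*10*) IArith ADiv 13 4 5; IArith AMul 14 13 7; IArith ASub 14 6 14; IJlt 1 14 22;
 IJlt 14 12 22; IArith AMul 15 13 5; IArith ASub 15 4 15; IArith AAdd 4 5 9;
 IArith AAdd 5 15 9; IArith AAdd 6 7 9; IArith AAdd 7 14 9; IJmp 10;
 (*22*) IArith AAdd 16 7 9; IJlt 9 7 25; IArith ASub 16 9 7;
 (*25*) ILook TQ 17 5; ILook TInvP 18 5; ILook TQ 19 16; IArith AMul 20 3 7;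
 IArith ASub 20 20 5; IArith ADiv 20 20 0; IArith AMul 20 20 18; IArith ASub 21 17 20;
 IArith ASub 21 21 19; IArith AMod 21 21 0; IHalt 21;
 (*36*) IHalt 9;
 (*37*) IArith AMul 22 0 0; IConst 23 1; IArith AAdd 24 3 9; IArith ASub 25 0 10;
 (*41*) IJlt 9 25 43; IJmp 51; IArith AMod 26 25 11; IJlt 26 10 47;
 IArith AMul 23 23 24; IArith AMod 23 23 22; IArith AMul 24 24 24;
 IArith AMod 24 24 22; IArith ADiv 25 25 11; IJmp 41;
 (*51*) IArith ASub 23 23 10; IArith ADiv 23 23 0; IHalt 23].

Section SizeBounds.
Variable p : nat.
Hypothesis p_prime : prime p.
Local Notation P := p%:Z.
Local Notation B := (p ^ 100)%N%:Z.

Lemma le_bound4 (x : int) : `|x| <= P * P * (P * P) -> `|x| <= B.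
Proof.
move=> x_le; apply: le_trans x_le _; rewrite -!PoszM lez_nat.
rewrite (_ : (p * p * (p * p) = p ^ 4)%N); last by rewrite !expnS expn0; ring.
by rewrite leq_pexp2l // prime_gt0.
Qed.

Lemma le_bound3 (x : int) : `|x| <= P * P * P -> `|x| <= B.
Proof.
move=> x_le; apply/le_bound4/(le_trans x_le); rewrite -!PoszM lez_nat.
by rewrite leq_mul2l leq_pmulr ?orbT // prime_gt0.
Qed.

Lemma le_bound2 (x : int) : `|x| <= P * P -> `|x| <= B.
Proof.
move=> x_le; apply/le_bound3/(le_trans x_le); rewrite -!PoszM lez_nat.
by rewrite leq_pmulr // prime_gt0.
Qed.

Lemma le_bound1 (x : int) : `|x| <= P -> `|x| <= B.
Proof.
move=> x_le; apply/le_bound2/(le_trans x_le); rewrite -!PoszM lez_nat.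
by rewrite leq_pmulr // prime_gt0.
Qed.
End SizeBounds.

(** * Correctness and step count *)

Section FloorBounds.
Variables (R : realType) (p : nat) (z : R).
Hypothesis p_gt1 : (1 < p)%N.
Hypothesis z_ge2 : 2 <= z.
Local Notation N := (Num.floor z).
Local Notation K := (Num.floor (p%:R / z)).

Let z_gt0 : 0 < z. Proof. by apply: lt_le_trans z_ge2. Qed.
Let p_gt0 : 0 < p%:R :> R. Proof. by rewrite ltr0n; lia. Qed.

Lemma floor_ge2 : 2 <= N.
Proof. by rewrite floor_ge_int. Qed.

Lemma floor_div_ltp : K < p%:Z.
Proof.
rewrite floor_lt_int ltr_pdivrMr // -[_%:~R]/(p%:R).
by have := z_ge2; have := p_gt0; nra.
Qed.

Lemma le_div_floor (w : int) : 0 <= w -> w * (N + 1) <= p%:Z -> w%:~R <= p%:R / z.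
Proof.
move=> w_ge0 wN_le; rewrite ler_pdivlMr //.
have z_lt : z < (N + 1)%:~R by apply: floorD1_gt.
have : (w * (N + 1))%:~R <= p%:Z%:~R :> R by rewrite ler_int.
have : 0 <= w%:~R :> R by rewrite ler0z.
by rewrite rmorphM /= -[p%:Z%:~R]/(p%:R); nra.
Qed.

Lemma floor_div_lt_floor : K < N -> p%:Z < N * (N + 1).
Proof.
rewrite floor_lt_int ltr_pdivrMr // => p_lt.
have z_lt : z < (N + 1)%:~R by apply: floorD1_gt.
have : 0 <= N%:~R :> R by rewrite ler0z; have := floor_ge2; lia.
by rewrite -(ltr_int R) rmorphM /= -[p%:Z%:~R]/(p%:R); nra.
Qed.
End FloorBounds.

Lemma expn_sqmul_mod (m res bs e : nat) :
  ((if odd e then res * bs %% m else res) * (bs * bs %% m) ^ (e %/ 2)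
    = res * bs ^ e %[mod m])%N.
Proof.
have -> : (bs ^ e = bs ^ (e %% 2) * (bs * bs) ^ (e %/ 2))%N.
  by rewrite expnMn -!expnD; congr (bs ^ _)%N; rewrite {1}(divn_eq e 2); lia.
rewrite -modnMmr modnXm modnMmr modn2.
by case: ifP => _; rewrite ?modnMml ?expn1 ?expn0 ?mul1n // mulnA.
Qed.

Section PowerLoop.
Variables (p u : nat) (T : tbl -> int -> int).
Hypothesis p_prime : prime p.
Local Notation B := (p ^ 100)%N%:Z.
Local Notation p2 := (p * p)%N.

Record pow_state (res bs e : nat) (g : nat -> int) : Prop := PowState {
  ps_p : g 0%N = p%:Z;
  ps_zero : g 9%N = 0;
  ps_one : g 10%N = 1;
  ps_two : g 11%N = 2;
  ps_p2 : g 22%N = p2%:Z;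
  ps_res : g 23%N = res%:Z;
  ps_base : g 24%N = bs%:Z;
  ps_exp : g 25%N = e%:Z }.

Let p2_gt0 : (0 < p2)%N. Proof. by rewrite muln_gt0 prime_gt0. Qed.

Let mul_small (a b : nat) : (a < p2)%N -> (b < p2)%N -> `|a%:Z * b%:Z| <= B.
Proof.
move=> a_lt b_lt; apply: le_bound4 => //; rewrite -!PoszM lez_nat.
by apply: leq_mul; apply: ltnW.
Qed.

Let mod_small (x : int) : `|(x %% p2%:Z)%Z| <= B.
Proof.
apply: le_bound4 => //; rewrite -!PoszM.
have := modz_ge0 x (_ : p2%:Z != 0); have := ltz_pmod x (_ : 0 < p2%:Z).
by move: p2_gt0; clear; nia.
Qed.

Lemma pow_exit res bs g : pow_state res bs 0 g -> reach Prog T B 2 (41%N, g) (51%N, g).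
Proof.
case=> _ zero _ _ _ _ _ exp.
by exec_nojump; [rewrite zero exp | exec_goto; exact: reach0].
Qed.

Lemma pow_iter res bs e g : (0 < e < p)%N -> (res < p2)%N -> (bs < p2)%N ->
  pow_state res bs e g ->
  exists2 g', reach Prog T B (if odd e then 9 else 7) (41%N, g) (41%N, g') &
    pow_state (if odd e then (res * bs) %% p2 else res)%N ((bs * bs) %% p2)%N (e %/ 2)%N g'.
Proof.
move=> /andP[e_gt0 e_lt] res_lt bs_lt [pp zero one two sq res_ bs_ e_].
have e_mod_small : `|(e%:Z %% 2)%Z| <= B.
  by apply: le_bound1 => //; rewrite modz_nat; lia.
have e_div : `|(e%:Z %/ 2)%Z| <= B by apply: le_bound1 => //; rewrite divz_nat; lia.
case: ifP => e_odd; eexists.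
- exec_jump; first by rewrite zero e_; lia.
  exec_arith; first by rewrite e_ two.
  exec_nojump; first by rewrite one e_ two modz_nat modn2 e_odd.
  exec_arith; first by rewrite res_ bs_; apply: mul_small.
  exec_arith; first by rewrite sq; apply: mod_small.
  exec_arith; first by rewrite bs_; apply: mul_small.
  exec_arith; first by rewrite sq; apply: mod_small.
  exec_arith; first by rewrite e_ two.
  by exec_goto; exact: reach0.
- by split; rewrite /upd //=; rewrite ?res_ ?bs_ ?sq ?e_ ?two ?modz_nat ?divz_nat ?PoszM.
- exec_jump; first by rewrite zero e_; lia.
  exec_arith; first by rewrite e_ two.
  exec_jump; first by rewrite one e_ two modz_nat modn2 e_odd.
  exec_arith; first by rewrite bs_; apply: mul_small.
  exec_arith; first by rewrite sq; apply: mod_small.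
  exec_arith; first by rewrite e_ two.
  by exec_goto; exact: reach0.
by split; rewrite /upd //=; rewrite ?res_ ?bs_ ?sq ?e_ ?two ?modz_nat ?divz_nat ?PoszM.
Qed.

Lemma pow_loop e : forall res bs g, (e < p)%N -> (res < p2)%N -> (bs < p2)%N ->
  (res * bs ^ e = u ^ p.-1 %[mod p2])%N -> pow_state res bs e g ->
  exists i k bs' g', [/\ (k <= 9 * i + 2)%N, (2 ^ i <= maxn 1 (2 * e))%N,
    reach Prog T B k (41%N, g) (51%N, g') & pow_state (u ^ p.-1 %% p2) bs' 0 g'].
Proof.
elim/ltn_ind: e => e IH res bs g e_lt res_lt bs_lt inv state.
have [e0 | e_gt0] := posnP e.
  rewrite e0 in state inv; rewrite e0 muln0 /=.
  rewrite expn0 muln1 (modn_small res_lt) in inv.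
  by exists 0%N, 2%N, bs, g; split => //; [apply: pow_exit state | rewrite -inv].
have e_range : (0 < e < p)%N by rewrite e_gt0.
have [g1 run1 state1] := pow_iter e_range res_lt bs_lt state.
have half_lt : (e %/ 2 < e)%N by rewrite ltn_Pdiv.
have [||i [k [bs' [g' [k_le pow_le run2 state']]]]] :=
  IH _ half_lt _ _ _ (leq_ltn_trans (leq_div _ _) e_lt) _ (ltn_pmod _ p2_gt0) _ state1.
- by case: ifP => _ //; rewrite ltn_pmod.
- by rewrite expn_sqmul_mod.
exists i.+1, ((if odd e then 9 else 7) + k)%N, bs', g'; split => //.
- by case: ifP; lia.
- by rewrite expnS; move: pow_le e_gt0; clear; lia.
- exact: reach_trans run1 run2.
Qed.
End PowerLoop.

Section EuclidRun.
Variables (p : nat) (N : int) (u : nat) (T : tbl -> int -> int).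
Hypothesis p_prime : prime p.
Hypothesis N_ltp : N < p%:Z.
Hypothesis N_ge2 : 2 <= N.
Local Notation B := (p ^ 100)%N%:Z.

Record euclid_state (j : nat) (g : nat -> int) : Prop := EuclidState {
  es_p : g 0%N = p%:Z;
  es_N : g 1%N = N;
  es_u : g 3%N = u%:Z;
  es_zero : g 9%N = 0;
  es_negN : g 12%N = - N;
  es_inv : euclid_inv p N u j (g 4%N) (g 5%N) (g 6%N) (g 7%N) }.

Record exit_state (g : nat -> int) : Prop := ExitState {
  xs_p : g 0%N = p%:Z;
  xs_u : g 3%N = u%:Z;
  xs_zero : g 9%N = 0;
  xs_rep : short_rep p N u (g 5%N) (g 7%N) }.

Section Iteration.
Variables (j : nat) (rp rc sp sc : int).
Hypothesis inv : euclid_inv p N u j rp rc sp sc.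
Local Notation a := (rp %/ rc)%Z.
Local Notation sn := (sp - a * sc).
Local Notation rn := (rp - a * rc).

Lemma euclid_values_small :
  [/\ `|a| <= B, `|a * sc| <= B, `|sn| <= B, `|a * rc| <= B & `|rn| <= B].
Proof.
case: (inv) => rc_gt0 rc_lt rp_le _ _ _ _ _ sp_le sc_le _.
have [_ /andP[rn_ge0 rn_lt]] := euclid_rem inv; have a_ge1 := euclid_quot_ge1 inv.
have [sn_abs _] := euclid_next_cofactor inv.
have arc_le : a * rc <= rp by move: rn_ge0; clear; lia.
have a_le : a <= p%:Z by move: arc_le rc_gt0 rp_le a_ge1; clear; nia.
have asc_le : a * `|sc| <= p%:Z * p%:Z.
  by apply: ler_pM => //; move: a_ge1 sc_le N_ltp; clear; lia.
split.
- by apply: le_bound1 => //; move: a_le a_ge1; clear; lia.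
- by apply: le_bound2 => //; rewrite normrM ger0_norm //; move: a_ge1; clear; lia.
- apply: le_bound3 => //; rewrite sn_abs.
  have p_ge2 : 2 <= p%:Z by rewrite lez_nat prime_gt1.
  have p_le_pp : p%:Z <= p%:Z * p%:Z by rewrite ler_peMl //; lia.
  apply: le_trans (_ : 2 * (p%:Z * p%:Z) <= _).
    by move: sp_le sc_le N_ltp asc_le p_le_pp; clear; lia.
  by rewrite mulrC ler_pM2l // mulr_gt0 //; lia.
- by apply: le_bound1 => //; move: arc_le a_ge1 rc_gt0 rp_le; clear; nia.
- by apply: le_bound1 => //; move: rn_ge0 rn_lt rc_lt rp_le; clear; lia.
Qed.
End Iteration.

Lemma euclid_iter j g : euclid_state j g ->
  `|g 6%N - (g 4%N %/ g 5%N)%Z * g 7%N| <= N ->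
  exists2 g', reach Prog T B 12 (10%N, g) (10%N, g') &
    euclid_state j.+1 g' /\ (`|g' 5%N| < `|g 5%N|)%N.
Proof.
case=> pp NN uu zero negN inv sn_le.
have [a_small asc_small sn_small arc_small rn_small] := euclid_values_small inv.
have [_ /andP[rn_ge0 rn_lt]] := euclid_rem inv.
have [rc_gt0 rc_lt rp_le _ _ _ _ _ _ sc_le _] := inv.
have rc_small : `|g 5%N| <= B by apply: le_bound1 => //; move: rc_gt0 rc_lt rp_le; clear; lia.
have sc_small : `|g 7%N| <= B by apply: le_bound1 => //; move: sc_le N_ltp; clear; lia.
eexists.
  do 3!exec_arith.
  exec_nojump; first by rewrite NN; move: sn_le; clear; lia.
  exec_nojump; first by rewrite negN; move: sn_le; clear; lia.
  do 2!exec_arith.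
  do 4!(exec_arith; first by rewrite zero addr0).
  by exec_goto; exact: reach0.
split; last by rewrite /upd /= zero addr0; move: rn_ge0 rn_lt; clear; lia.
by split; rewrite /upd //= zero !addr0; apply: euclid_step.
Qed.

Lemma euclid_exit_run j g : euclid_state j g ->
  N < `|g 6%N - (g 4%N %/ g 5%N)%Z * g 7%N| ->
  exists2 k, (k <= 5)%N & exists2 g', reach Prog T B k (10%N, g) (22%N, g') & exit_state g'.
Proof.
case=> pp NN uu zero negN inv N_lt.
have [a_small asc_small sn_small _ _] := euclid_values_small inv.
have rep := euclid_short_rep inv N_lt.
have [sn_gt | sn_le] := ltrP N (g 6%N - (g 4%N %/ g 5%N)%Z * g 7%N).
  exists 4%N => //; eexists.
    do 3!exec_arith.
    by exec_jump; [rewrite NN | exact: reach0].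
  by split.
have sn_lt : g 6%N - (g 4%N %/ g 5%N)%Z * g 7%N < - N by move: N_lt sn_le; clear; lia.
exists 5%N => //; eexists.
  do 3!exec_arith.
  by exec_nojump; [rewrite NN | exec_jump; [rewrite negN | exact: reach0]].
by split.
Qed.

Lemma euclid_loop m : forall j g, (`|g 5%N| < m)%N -> euclid_state j g ->
  exists i k g', [/\ (k <= 12 * i + 5)%N, reach Prog T B k (10%N, g) (22%N, g'),
    exit_state g' & (2 ^ (j + i))%N%:Z <= 4 * N ^+ 2].
Proof.
elim: m => [|m IH] j g // g5_lt state.
have inv := es_inv state.
have growth_le : (2 ^ j)%N%:Z <= 4 * N ^+ 2.
  have [_ _ _ _ _ _ _ _ sp_le sc_le growth] := inv.
  by apply: le_trans growth _; have : 0 <= `|g 6%N| by []; move: sp_le sc_le; clear; nia.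
have [sn_le | N_lt] := lerP `|g 6%N - (g 4%N %/ g 5%N)%Z * g 7%N| N.
  have [g1 run1 [state1 g5_dec]] := euclid_iter state sn_le.
  have [|i [k [g' [k_le run2 exit_st growth']]]] := IH j.+1 g1 _ state1.
    by move: g5_dec g5_lt; clear; lia.
  exists i.+1, (12 + k)%N, g'; split => //; first by move: k_le; clear; lia.
    exact: reach_trans run1 run2.
  by rewrite addnS.
have [k k_le [g' run exit_st]] := euclid_exit_run state N_lt.
by exists 0%N, k, g'; split; rewrite ?addn0.
Qed.
End EuclidRun.

Section AbsBlock.
Variables (T : tbl -> int -> int) (B : int).

Lemma abs_run g : g 9%N = 0 -> `|g 7%N| <= B ->
  exists2 k, (k <= 3)%N & exists2 g', reach Prog T B k (22%N, g) (25%N, g') &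
    g' 16%N = `|g 7%N| /\ forall r, r != 16%N -> g' r = g r.
Proof.
move=> zero s_small; have [s_gt0 | s_le0] := ltrP 0 (g 7%N).
  exists 2%N => //; eexists.
    exec_arith; first by rewrite zero addr0.
    by exec_jump; [rewrite zero | exact: reach0].
  by rewrite /upd /= zero addr0 gtr0_norm //; split => // r /negbTE ->.
exists 3%N => //; eexists.
  exec_arith; first by rewrite zero addr0.
  exec_nojump; first by rewrite zero.
  exec_arith; first by rewrite zero sub0r normrN.
  exact: reach0.
by rewrite /upd /= zero sub0r ler0_norm //; split => // r /negbTE ->.
Qed.
End AbsBlock.

Section LookupBlock.
Variables (p u w : nat) (s : int) (qw iw qs : nat).
Hypotheses (p_prime : prime p) (p_gt2 : (2 < p)%N).
Hypotheses (u_lt : (u < p)%N) (w_lt : (w < p)%N) (s_lt : `|s| < p%:Z).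
Hypotheses (qw_lt : (qw < p)%N) (iw_lt : (iw < p)%N) (qs_lt : (qs < p)%N).
Hypothesis p_dvd : (p%:Z %| u%:Z * s - w%:Z)%Z.
Local Notation P := p%:Z.
Local Notation B := (p ^ 100)%N%:Z.
Local Notation t := ((u%:Z * s - w%:Z) %/ P)%Z.

Lemma lookup_values_small :
  [/\ `|u%:Z * s| <= B, `|u%:Z * s - w%:Z| <= B, `|t| <= B & `|t * iw%:Z| <= B] /\
  [/\ `|qw%:Z - t * iw%:Z| <= B, `|qw%:Z - t * iw%:Z - qs%:Z| <= B
    & `|((qw%:Z - t * iw%:Z - qs%:Z) %% P)%Z| <= B].
Proof.
have P_gt2 : 2 < P by rewrite ltz_nat.
have cube : P * P + 3 * P <= P * P * P by move: P_gt2; clear; nia.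
have us_le : `|u%:Z * s| <= P * P.
  by rewrite normrM; apply: ler_pM => //; move: u_lt s_lt; clear; lia.
have usw_le : `|u%:Z * s - w%:Z| <= P * P + P by move: us_le w_lt; clear; lia.
have t_le : `|t| <= P + 1.
  have : `|t| * P = `|u%:Z * s - w%:Z|.
    by rewrite -[in RHS](divzK p_dvd) normrM.
  by move: usw_le P_gt2; clear; nia.
have tiw_le : `|t * iw%:Z| <= (P + 1) * P.
  by rewrite normrM; apply: ler_pM => //; move: iw_lt; clear; lia.
split; split.
- exact: le_bound2.
- by apply: le_bound3 => //; move: usw_le cube; clear; lia.
- by apply: le_bound3 => //; move: t_le cube P_gt2; clear; nia.
- by apply: le_bound3 => //; move: tiw_le cube; clear; nia.
- by apply: le_bound3 => //; move: tiw_le cube qw_lt; clear; nia.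
- by apply: le_bound3 => //; move: tiw_le cube qw_lt qs_lt; clear; nia.
apply: le_bound1 => //; have P_gt0 : 0 < P by move: P_gt2; clear; lia.
have := modz_ge0 (qw%:Z - t * iw%:Z - qs%:Z) (lt0r_neq0 P_gt0).
by have := ltz_pmod (qw%:Z - t * iw%:Z - qs%:Z) P_gt0; clear; lia.
Qed.

Lemma lookup_run T g : g 0%N = P -> g 3%N = u%:Z -> g 5%N = w%:Z -> g 7%N = s ->
  g 16%N = `|s| -> T TQ w%:Z = qw%:Z -> T TInvP w%:Z = iw%:Z -> T TQ `|s| = qs%:Z ->
  run Prog T B 11 (25%N, g) = Done ((qw%:Z - t * iw%:Z - qs%:Z) %% P)%Z.
Proof.
move=> pp uu ww ss abs_s Tqw Tiw Tqs.
have [[us_small usw_small t_small tiw_small] [d1_small d2_small r_small]] :=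
  lookup_values_small.
have [g' run_g' res] : exists2 g', reach Prog T B 10 (25%N, g) (35%N, g') &
    g' 21%N = ((qw%:Z - t * iw%:Z - qs%:Z) %% P)%Z.
  eexists.
    do 3!exec_look.
    by do 7!(exec_arith; first by rewrite ?pp ?uu ?ww ?ss ?abs_s ?Tqw ?Tiw ?Tqs); exact: reach0.
  by rewrite /upd /= pp uu ww ss abs_s Tqw Tiw Tqs.
by rewrite (reach_done run_g' (@step_halt Prog T B 35%N g' erefl 21%N erefl)) res.
Qed.
End LookupBlock.

Lemma leq_trunc_log_sq n i : (2 <= n)%N -> (2 ^ i <= 4 * n * n)%N ->
  (i <= 2 * trunc_log 2 n + 3)%N.
Proof.
move=> n_ge2 pow_le; have := @trunc_log_ltn 2 n erefl; move: (trunc_log 2 n) => l n_lt.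
rewrite leqNgt; apply/negP => l_lt.
have : (2 ^ (2 * l + 4) <= 2 ^ i)%N by rewrite leq_pexp2l //; move: l_lt; clear; lia.
rewrite (_ : 2 * l + 4 = 2 + l.+1 + l.+1)%N ?expnD; last by clear; lia.
have : (n * n < 2 ^ l.+1 * 2 ^ l.+1)%N by apply: ltn_mul.
by move: pow_le; clear; nia.
Qed.

Section Main.
Variables (R : realType) (p : nat) (z : R) (u : nat).
Hypotheses (p_prime : prime p) (z_ge2 : 2 <= z) (u_lt : (u < p.-1)%N).
Local Notation N := (Num.floor z).
Local Notation K := (Num.floor (p%:R / z)).
Local Notation T := (tables p z).
Local Notation B := (p ^ 100)%N%:Z.
Arguments tables : simpl never.

Let p_gt1 : (1 < p)%N. Proof. exact: prime_gt1. Qed.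

Lemma final_run g : (0 < u)%N -> N <= K -> exit_state p N u g ->
  exists2 k, (k <= 14)%N & run Prog T B k (22%N, g) = Done (fq p u)%:Z.
Proof.
move=> u_gt0 N_le [pp uu zero [w_gt0 w_small s_neq0 s_le s_congr]].
have N_ge2 := floor_ge2 z_ge2; have N_ltp := le_lt_trans N_le (floor_div_ltp p_gt1 z_ge2).
have p_gt2 : (2 < p)%N by move: u_gt0 u_lt; clear; lia.
have [w Ew] : exists w : nat, g 5%N = w%:Z by exists `|g 5%N|%N; rewrite gez0_abs ?ltW.
set s := g 7%N in s_neq0 s_le s_congr *; rewrite Ew in w_gt0 w_small s_congr.
have w_lt : (0 < w < p)%N.
  have : w%:Z * 3 <= w%:Z * (N + 1) by rewrite ler_pM2l //; move: N_ge2; clear; lia.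
  by move: w_gt0 w_small; clear; lia.
have pNw : ~~ (p %| w)%N by apply/negP => /dvdn_leq; move: w_lt; clear; lia.
have pNs : ~~ (p %| `|s|)%N.
  by apply/negP => /dvdn_leq; rewrite absz_gt0 => /(_ s_neq0); move: s_le N_ltp; clear; lia.
have w_le : w%:Z%:~R <= p%:R / z by apply: le_div_floor.
have s_small : `|s| <= B by apply: le_bound1 => //; move: s_le N_ltp; clear; lia.
have [k1 k1_le [g1 run1 [abs_s frame]]] := abs_run T zero s_small.
have Tqw : T TQ w%:Z = (fq p w)%:Z by rewrite /tables /= w_le.
have Tiw : T TInvP w%:Z = (invmod p w)%:Z.
  have w_ge1 : 1 <= w%:Z by move: w_lt; clear; lia.
  by rewrite /tables /= w_le w_ge1 /= coprime_sym prime_coprime // pNw.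
have Tqs : T TQ `|s| = (fq p `|s|)%:Z.
  by rewrite /tables /= -floor_ge_int (le_trans s_le N_le).
exists (k1 + 11)%N; first by move: k1_le; clear; lia.
have u_ltp : (u < p)%N by move: u_lt; clear; lia.
have s_ltp : `|s| < p%:Z by move: s_le N_ltp; clear; lia.
rewrite run_cat run1 (lookup_run p_prime p_gt2 u_ltp (andP w_lt).2 s_ltp
  (fq_ltp p_prime w) (invmod_ltp p_prime pNw) (fq_ltp p_prime `|s|) s_congr
  _ _ _ _ abs_s Tqw Tiw Tqs); try by rewrite frame.
have p_odd : odd p by case: (even_prime p_prime) p_gt2 => [->|].
have pNu : ~~ (p %| u)%N by apply/negP => /dvdn_leq; move: u_gt0 u_ltp; clear; lia.
by rewrite -(fq_reduction p_prime p_odd pNu pNw pNs) // (mulrC p%:Z) divzK // addrC subrK.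
Qed.

Record start_state (g : nat -> int) : Prop := StartState {
  ss_p : g 0%N = p%:Z;
  ss_N : g 1%N = N;
  ss_K : g 2%N = K;
  ss_u : g 3%N = u%:Z;
  ss_zero : g 9%N = 0;
  ss_one : g 10%N = 1;
  ss_two : g 11%N = 2 }.

Lemma start_run :
  exists2 g, reach Prog T B 3 (0%N, init p z u) (3%N, g) & start_state g.
Proof. by eexists; [do 3!exec_const; exact: reach0 | split]. Qed.

Local Notation L := (trunc_log 2 `|N|%N).

Let L_gt0 : (0 < L)%N.
Proof. by rewrite trunc_log_gt0; have := floor_ge2 z_ge2; clear; lia. Qed.

Let log_bound i : (2 ^ i)%N%:Z <= 4 * N ^+ 2 -> (i <= 2 * L + 3)%N.
Proof.
move=> pow_le; apply: leq_trunc_log_sq; first by have := floor_ge2 z_ge2; clear; lia.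
rewrite -lez_nat !PoszM gez0_abs; first by move: pow_le; rewrite expr2 mulrA.
by have := floor_ge2 z_ge2; lia.
Qed.

Lemma zero_branch g : u = 0%N -> start_state g ->
  run Prog T B 2 (3%N, g) = Done (fq p u)%:Z.
Proof.
move=> u0 [_ _ _ uu zero one _].
have reach_halt : reach Prog T B 1 (3%N, g) (36%N, g).
  by exec_jump; [rewrite uu one u0 | exact: reach0].
by rewrite (reach_done reach_halt (@step_halt Prog T B 36%N g erefl 9%N erefl)) zero u0 /fq dvdn0.
Qed.

Lemma pow_branch g : (0 < u)%N -> K < N -> start_state g ->
  exists2 k, (k <= 97 * L)%N & run Prog T B k (3%N, g) = Done (fq p u)%:Z.
Proof.
move=> u_gt0 K_lt [pp NN KK uu zero one two].
have u_ltp : (u < p)%N by move: u_lt; clear; lia.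
have p2_gt1 : (1 < p * p)%N by move: p_gt1; clear; nia.
have [g1 run1 state1] : exists2 g1, reach Prog T B 6 (3%N, g) (41%N, g1) &
    pow_state p 1 u p.-1 g1.
  eexists.
    exec_nojump; first by rewrite uu one; move: u_gt0; clear; lia.
    exec_jump; first by rewrite KK NN.
    exec_arith; first by rewrite pp; apply: le_bound2; rewrite ?normrM.
    exec_const.
    exec_arith; first by rewrite uu zero addr0; apply: le_bound1 => //; lia.
    exec_arith; first by rewrite pp one; apply: le_bound1 => //; lia.
    exact: reach0.
  by split; rewrite /upd //= ?pp ?zero ?one ?two ?uu ?addr0 //; lia.
have e_lt : (p.-1 < p)%N by move: p_gt1; clear; lia.
have u_lt_p2 : (u < p * p)%N by move: u_ltp p_gt1; clear; nia.
have inv1 : (1 * u ^ p.-1 = u ^ p.-1 %[mod p * p])%N by rewrite mul1n.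
have [i [k [bs [g2 [k_le pow_le run2 state2]]]]] :=
  pow_loop T p_prime e_lt p2_gt1 u_lt_p2 inv1 state1.
have pNu : ~~ (p %| u)%N by apply/negP => /dvdn_leq; move: u_gt0 u_ltp; clear; lia.
have res_lt : (u ^ p.-1 %% (p * p) < p * p)%N by rewrite ltn_pmod // ltnW.
have res_fq := fq_of_pow_mod p_prime pNu res_lt (modn_mod (u ^ p.-1) (p * p)).
have [_ zero2 one2 _ _ res2 _ _] := state2.
have [g3 run3 out3] : exists2 g3, reach Prog T B 2 (51%N, g2) (53%N, g3) &
    g3 23%N = (fq p u)%:Z.
  eexists.
    exec_arith; first by rewrite res2 one2; apply: le_bound2; move: res_lt; lia.
    exec_arith; first by rewrite res2 one2 (ps_p state2) res_fq; apply: le_bound1;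
      have := fq_ltp p_prime u; lia.
    exact: reach0.
  by rewrite /upd /= res2 one2 (ps_p state2).
have i_le : (i <= 2 * L + 3)%N.
  apply: log_bound; rewrite expr2.
  have : (2 ^ i)%N%:Z <= (2 * p)%N%:Z.
    by rewrite lez_nat; apply: leq_trans pow_le _; rewrite geq_max; lia.
  have := floor_div_lt_floor p_gt1 z_ge2 K_lt; have := floor_ge2 z_ge2.
  by rewrite PoszM; clear; nia.
exists (6 + k + 2).+1; first by move: k_le i_le L_gt0; clear; lia.
have run123 := reach_trans (reach_trans run1 run2) run3.
by rewrite (reach_done run123 (@step_halt Prog T B 53%N g3 erefl 23%N erefl)) out3.
Qed.

Lemma euclid_branch g : (0 < u)%N -> N <= K -> start_state g ->
  exists2 k, (k <= 97 * L)%N & run Prog T B k (3%N, g) = Done (fq p u)%:Z.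
Proof.
move=> u_gt0 N_le [pp NN KK uu zero one two].
have N_ge2 := floor_ge2 z_ge2; have N_ltp := le_lt_trans N_le (floor_div_ltp p_gt1 z_ge2).
have u_ltp : (u < p)%N by move: u_lt; clear; lia.
have [g1 run1 state1] : exists2 g1, reach Prog T B 7 (3%N, g) (10%N, g1) &
    euclid_state p N u 0 g1.
  eexists.
    exec_nojump; first by rewrite uu one; move: u_gt0; clear; lia.
    exec_nojump; first by rewrite KK NN.
    exec_arith; first by rewrite zero NN sub0r normrN; apply: le_bound1 => //; lia.
    exec_arith; first by rewrite pp zero addr0; apply: le_bound1.
    exec_arith; first by rewrite uu zero addr0; apply: le_bound1 => //; lia.
    by do 2!exec_const; exact: reach0.
  split; rewrite /upd //= ?pp ?NN ?uu ?zero ?addr0 ?sub0r //.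
  split => //; rewrite ?normr0 ?normr1 ?mulr0 ?mulr1 ?addr0 ?subrr ?sub0r ?dvdz0 //.
  - by rewrite rpredN dvdzz.
  - by move: N_ge2; clear; lia.
have [i [k [g2 [k_le run2 exit2 growth]]]] :=
  euclid_loop T p_prime N_ltp N_ge2 (ltnSn `|g1 5%N|%N) state1.
have [k' k'_le run3] := final_run u_gt0 N_le exit2.
exists (7 + k + k')%N; first by have := log_bound growth; move: k_le k'_le L_gt0; clear; lia.
by rewrite run_cat (reach_trans run1 run2).
Qed.

Lemma branch_run g : start_state g ->
  exists2 k, (k <= 97 * L)%N & run Prog T B k (3%N, g) = Done (fq p u)%:Z.
Proof.
move=> start; have [u0 | u_gt0] := posnP u.
  by exists 2%N; [move: L_gt0; clear; lia | exact: zero_branch].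
by have [K_lt | N_le] := ltrP K N; [apply: pow_branch | apply: euclid_branch].
Qed.

Lemma fq_run :
  exists2 n, (n <= 100 * L)%N & run Prog T B n (0%N, init p z u) = Done (fq p u)%:Z.
Proof.
have [g run0 start] := start_run; have [k k_le run_k] := branch_run start.
by exists (3 + k)%N; [move: k_le L_gt0; clear; lia | rewrite run_cat run0].
Qed.
End Main.

Theorem theorem7 :
  exists (P : seq instr) (C : nat),
  forall (R : realType) (p : nat) (z : R) (u : nat),
    prime p -> 2 <= z -> (u < p.-1)%N ->
    exists n : nat,
      (n <= C * trunc_log 2 `|Num.floor z|%N)%N /\
      run P (tables p z) (p ^ C)%:Z n (0%N, init p z u) = Done (fq p u)%:Z.
Proof.
exists Prog, 100%N => R p z u p_prime z_ge2 u_lt.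
by have [n n_le run_n] := fq_run p_prime z_ge2 u_lt; exists n.
Qed.
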